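(* Let $(M,\mathrm{dist})$ be a compact metric space and $\phi$ a topological flow on $M$. Suppose $\mathrm{Sing}(\phi)$ is a finite set and every $p\in\mathrm{Sing}(\phi)$ is Lyapunov stable or Lyapunov unstable. Then $\phi$ has the oriented shadowing property if and only if $\phi$ has the standard shadowing property.
   Context: A topological flow on $M$ is a continuous map $\phi:\mathbb{R}\times M\to M$ with $\phi(0,x)=x$ and $\phi(s+t,x)=\phi(s,\phi(t,x))$ for all $s,t\in\mathbb{R}$, $x\in M$. $\mathrm{Sing}(\phi)=\{x\in M: \phi(t,x)=x\ \forall t\in\mathbb{R}\}$. A point $p\in\mathrm{Sing}(\phi)$ is Lyapunov stable if for every neighborhood $V$ of $p$ there is a neighborhood $U$ of $p$ with $\phi(t,x)\in V$ for all $t\ge 0$, $x\in U$; it is Lyapunov unstable if the same holds with $t\le 0$. A map $\xi:\mathbb{R}\to M$ is a $d$-pseudotrajectory of $\phi$ if $\mathrm{dist}(\xi(t+s),\phi(s,\xi(t)))<d$ for all $t\in\mathbb{R}$, $s\in[0,1]$. $\mathrm{Rep}$ denotes the set of orientation-preserving homeomorphisms $\mathbb{R}\to\mathbb{R}$, and for $\varepsilon>0$, $\mathrm{Rep}(\varepsilon)=\{f\in\mathrm{Rep}: |\frac{f(a)-f(b)}{a-b}-1|<\varepsilon \text{ for all } a>b\}$. $\phi$ has the standard shadowing property if for every $\varepsilon>0$ there is $d>0$ such that for every $d$-pseudotrajectory $\xi$ there are $x\in M$ and $h\in\mathrm{Rep}(\varepsilon)$ with $\mathrm{dist}(\xi(t),\phi(h(t),x))<\varepsilon$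 for all $t\in\mathbb{R}$. $\phi$ has the oriented shadowing property if the same holds with $h\in\mathrm{Rep}$ instead of $h\in\mathrm{Rep}(\varepsilon)$. *)

From HB Require Import structures.
From mathcomp Require Import all_boot all_order all_algebra.
From mathcomp Require Import all_classical all_reals all_analysis.
Set Implicit Arguments. Unset Strict Implicit. Unset Printing Implicit Defensive.
Import Order.TTheory GRing.Theory Num.Theory.
Import numFieldNormedType.Exports.
Local Open Scope classical_set_scope.
Local Open Scope ring_scope.

Section Flows.
Context {R : realType} {M : metricType R}.

Definition is_flow (phi : R -> M -> M) : Prop :=
  continuous (fun p : R * M => phi p.1 p.2) /\
  (forall x, phi 0 x = x) /\
  (forall s t x, phi (s + t) x = phi s (phi t x)).

Definition Sing (phi : R -> M -> M) : set M :=
  [set x | forall t, phi t x = x].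

Definition lyapunov_stable (phi : R -> M -> M) (p : M) : Prop :=
  forall V : set M, nbhs p V ->
    exists2 U : set M, nbhs p U & forall t x, 0 <= t -> U x -> V (phi t x).

Definition lyapunov_unstable (phi : R -> M -> M) (p : M) : Prop :=
  forall V : set M, nbhs p V ->
    exists2 U : set M, nbhs p U & forall t x, t <= 0 -> U x -> V (phi t x).

Definition pseudotrajectory (phi : R -> M -> M) (d : R) (xi : R -> M) : Prop :=
  forall t s, 0 <= s <= 1 -> mdist (xi (t + s)) (phi s (xi t)) < d.

End Flows.

Definition is_Rep {R : realType} (h : R -> R) : Prop :=
  continuous h /\
  (exists g : R -> R, cancel h g /\ cancel g h /\ continuous g) /\
  (forall a b, a < b -> h a < h b).

Definition is_Rep_eps {R : realType} (eps : R) (h : R -> R) : Prop :=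
  is_Rep h /\ (forall a b, b < a -> `| (h a - h b) / (a - b) - 1 | < eps).

Definition standard_shadowing {R : realType} {M : metricType R}
  (phi : R -> M -> M) : Prop :=
  forall eps : R, 0 < eps -> exists2 d : R, 0 < d &
    forall xi : R -> M, pseudotrajectory phi d xi ->
      exists x : M, exists2 h : R -> R, is_Rep_eps eps h &
        forall t, mdist (xi t) (phi (h t) x) < eps.

Definition oriented_shadowing {R : realType} {M : metricType R}
  (phi : R -> M -> M) : Prop :=
  forall eps : R, 0 < eps -> exists2 d : R, 0 < d &
    forall xi : R -> M, pseudotrajectory phi d xi ->
      exists x : M, exists2 h : R -> R, is_Rep h &
        forall t, mdist (xi t) (phi (h t) x) < eps.

From HB Require Import structures.
From mathcomp Require Import all_boot all_order all_algebra.
From mathcomp Require Import all_classical all_reals all_analysis.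
From mathcomp Require Import ring lra finmap.
Set Implicit Arguments. Unset Strict Implicit. Unset Printing Implicit Defensive.
Import Order.TTheory GRing.Theory Num.Theory.
Import numFieldNormedType.Exports.
Local Open Scope classical_set_scope.
Local Open Scope ring_scope.

(* Standard shadowing trivially gives oriented shadowing. Conversely, let the orbit of x
   shadow a d-pseudotrajectory xi with an arbitrary reparametrisation h. Away from the
   finitely many singular points the flow displaces every point by some definite m > 0 in
   time +-sig, so while phi (h t) x stays far from Sing the closeness of xi to the orbit
   forces h b - b to vary by at most sig over unit time intervals: h - id is coarsely
   Lipschitz on that interval J of times. Before J the orbit has entered a small
   neighbourhood of a Lyapunov stable singular point, after J it stays near a Lyapunov
   unstable one, and there the time parametrisation is irrelevant. A McShane extension
   replaces h - id by a 2 sig-Lipschitz function c, and t |-> t + c t lies in Rep(eps). *)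

Section LipschitzReparametrization.
Context {R : realType}.
Implicit Types (c k : R -> R) (a b t : R).

Lemma lipschitz_continuous c (L : R) : 0 <= L ->
  (forall a b, `|c a - c b| <= L * `|a - b|) -> continuous c.
Proof.
move=> L0 Lc x; apply/cvgrPdist_lt => e e0.
have L1 : 0 < L + 1 by rewrite ltr_wpDl.
have eL : 0 < e / (L + 1) by rewrite divr_gt0.
near=> y.
have xy : `|x - y| < e / (L + 1).
  by near: y; apply: filterS (nbhsx_ballx x _ eL) => z; rewrite -ball_normE.
apply: (le_lt_trans (Lc x y)); rewrite (@le_lt_trans _ _ (L * (e / (L + 1))))//.
  by rewrite ler_wpM2l // ltW.
by rewrite mulrA ltr_pdivrMr // mulrC ltr_pM2l // ltrDl.
Unshelve. all: by end_near. Qed.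

Lemma lipschitz_id_add_increasing c (L : R) : L < 1 ->
  (forall a b, `|c a - c b| <= L * `|a - b|) ->
  forall a b, a < b -> a + c a < b + c b.
Proof.
move=> L1 Lc a b ab; have := Lc b a.
rewrite (@gtr0_norm _ (b - a)) ?subr_gt0 // ler_norml => /andP[cba _].
rewrite -subr_gt0 in ab; nra.
Qed.

Lemma lipschitz_id_add_continuous c (L : R) : 0 <= L ->
  (forall a b, `|c a - c b| <= L * `|a - b|) -> continuous (fun t => t + c t).
Proof.
move=> L0 Lc; apply: (@lipschitz_continuous _ (1 + L)) => [|a b].
  by rewrite addr_ge0.
rewrite opprD addrACA mulrDl mul1r; apply: le_trans (ler_normD _ _) _.
by rewrite lerD2l.
Qed.

Lemma lipschitz_id_add_surjective c (L : R) : 0 <= L <= 2^-1 ->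
  (forall a b, `|c a - c b| <= L * `|a - b|) -> forall y, exists t, t + c t = y.
Proof.
move=> /andP[L0 Lh] Lc y; set A := 2 * `|c y|.
have A0 : 0 <= A by rewrite mulr_ge0.
have cy : - `|c y| <= c y <= `|c y| by rewrite -ler_norml.
have lo : y - A + c (y - A) <= y.
  have := Lc (y - A) y; rewrite (_ : y - A - y = - A); last by ring.
  rewrite normrN (ger0_norm A0) ler_norml.
  rewrite /A in A0 *; nra.
have hi : y <= y + A + c (y + A).
  have := Lc (y + A) y; rewrite addrAC subrr add0r (ger0_norm A0) ler_norml.
  rewrite /A in A0 *; nra.
have yA : y - A <= y + A by lra.
have cf : {within `[y - A, y + A], continuous (fun t => t + c t)}.
  by apply: continuous_subspaceT; exact: lipschitz_id_add_continuous L0 Lc.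
have [|t _ <-] := @IVT _ _ _ _ y yA cf; last by exists t.
by rewrite ge_min lo le_max hi orbT.
Qed.

Lemma is_Rep_eps_id_add c (L eps : R) : 0 <= L -> L < eps -> L <= 2^-1 ->
  (forall a b, `|c a - c b| <= L * `|a - b|) -> is_Rep_eps eps (fun t => t + c t).
Proof.
move=> L0 Leps Lh Lc; set f := fun t => t + c t.
have L1 : L < 1 by apply: le_lt_trans Lh _; rewrite invf_lt1 ?ltr1n.
have fE a b : f a - f b - (a - b) = c a - c b by rewrite /f; ring.
have mono := lipschitz_id_add_increasing L1 Lc.
have inj : injective f.
  by move=> a b fab; case: (ltgtP a b) => // /mono; rewrite -/(f a) -/(f b) fab ltxx.
have surj y : {t | f t = y}.
  by apply: cid; apply: (lipschitz_id_add_surjective _ Lc); rewrite L0 Lh.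
pose g y := projT1 (surj y).
have fg : cancel g f by move=> y; rewrite /g; case: (surj y).
have gf : cancel f g by move=> t; apply: inj; rewrite fg.
split.
  split; first exact: lipschitz_id_add_continuous L0 Lc.
  split; last exact: mono.
  exists g; split => //; split => //.
  apply: (@lipschitz_continuous _ 2) => // a b.
  have := Lc (g a) (g b); rewrite -fE !fg distrC.
  have := ler_distD (a - b) (g a - g b) 0; rewrite !subr0.
  have := normr_ge0 (g a - g b); nra.
move=> a b ba; have ab0 : 0 < a - b by rewrite subr_gt0.
have -> : (f a - f b) / (a - b) - 1 = (c a - c b) / (a - b).
  by rewrite -fE; field; rewrite gt_eqF.
rewrite normrM (@gtr0_norm _ (a - b)^-1) ?invr_gt0 // ltr_pdivrMr //.
by apply: le_lt_trans (Lc a b) _; rewrite gtr0_norm // ltr_pM2r.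
Qed.

Lemma is_Rep_eps_id (eps : R) : 0 < eps -> is_Rep_eps eps id.
Proof.
move=> eps0; rewrite (_ : id = fun t => t + (fun=> 0) t); last first.
  by apply/funext => t; rewrite addr0.
by apply: (@is_Rep_eps_id_add _ 0) => // a b; rewrite subrr normr0 mul0r.
Qed.

Lemma coarse_lipschitz_approx (J : set R) k (s : R) : J !=set0 -> 0 <= s ->
  (forall a b, J a -> J b -> `|k a - k b| <= s * (`|a - b| + 1)) ->
  exists c, (forall a b, `|c a - c b| <= (2 * s) * `|a - b|) /\
    (forall t, J t -> k t - s <= c t <= k t).
Proof.
move=> [t0 Jt0] s0 Jk.
(* McShane: the lower envelope of the cones [u |-> k u + 2 s |t - u|], [u \in J] *)
pose E t := [set k u + 2 * s * `|t - u| | u in J].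
have Ene t : E t !=set0 by exists (k t0 + 2 * s * `|t - t0|); exists t0.
have Elb t : has_lbound (E t).
  exists (k t0 - s - s * `|t - t0|) => _ [u Ju <-].
  have := Jk u t0 Ju Jt0; rewrite ler_norml => /andP[k1 _].
  have := ler_distD t u t0; rewrite (distrC u t).
  have := normr_ge0 (t - u); nra.
exists (fun t => inf (E t)); split.
  have inf_shift a b : inf (E a) - 2 * s * `|a - b| <= inf (E b).
    apply: lb_le_inf => // _ [u Ju <-].
    have := ge_inf (Elb a) (ex_intro2 _ _ u Ju erefl).
    have := ler_distD b a u; nra.
  move=> a b; rewrite ler_norml; apply/andP; split.
    by have := inf_shift b a; rewrite distrC; lra.
  by have := inf_shift a b; lra.
move=> t Jt; apply/andP; split.
  apply: lb_le_inf => // _ [u Ju <-].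
  have := Jk u t Ju Jt; rewrite ler_norml (distrC u t) => /andP[k1 _].
  have := normr_ge0 (t - u); nra.
have := ge_inf (Elb t) (ex_intro2 _ _ t Jt erefl).
by rewrite subrr normr0 mulr0 addr0.
Qed.

Section UnitSteps.
Variables (J : set R) (k : R -> R) (s : R).
Hypothesis s0 : 0 <= s.
Hypothesis J_interval : forall a b r, J a -> J b -> a <= r <= b -> J r.
Hypothesis J_unit_step : forall a b, J a -> J b -> a <= b <= a + 1 -> `|k b - k a| <= s.

Lemma unit_steps_natmul (n : nat) a b : J a -> J b -> a <= b <= a + n%:R ->
  `|k b - k a| <= n%:R * s.
Proof.
elim: n a b => [|n IH] a b Ja Jb.
  by rewrite addr0 -eq_le => /eqP ->; rewrite subrr normr0 mul0r.
move=> /andP[ab bn]; have [b1|b1] := leP b (a + 1).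
  apply: le_trans (J_unit_step Ja Jb _) _; first by rewrite ab.
  by rewrite -[X in X <= _]mul1r ler_wpM2r // ler1n.
have Ja1 : J (a + 1) by apply: (J_interval Ja Jb); rewrite lerDl ler01 ltW.
have a1b : a + 1 <= b <= a + 1 + n%:R by rewrite ltW //=; move: bn; rewrite -natr1; lra.
have := IH _ _ Ja1 Jb a1b; have := J_unit_step Ja Ja1 (_ : a <= a + 1 <= a + 1).
rewrite lerDl ler01 lexx => /(_ isT).
have := ler_distD (k (a + 1)) (k b) (k a); rewrite -natr1 mulrDl mul1r; lra.
Qed.

Lemma unit_steps_coarse_lipschitz a b : J a -> J b -> `|k a - k b| <= s * (`|a - b| + 1).
Proof.
wlog ab : a b / a <= b.
  move=> wl Ja Jb; have [ab|ba] := leP a b; first exact: wl.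
  by rewrite distrC (distrC a); apply: wl (ltW ba) Jb Ja.
move=> Ja Jb; rewrite distrC (distrC a b) (@ger0_norm _ (b - a)) ?subr_ge0 //.
have /truncn_itv /andP[t1 t2] : 0 <= b - a by rewrite subr_ge0.
have bn : a <= b <= a + (Num.truncn (b - a)).+1%:R by rewrite ab -natr1 /=; lra.
apply: le_trans (unit_steps_natmul Ja Jb bn) _; rewrite -natr1.
by rewrite mulrC ler_wpM2l // lerD2r.
Qed.

End UnitSteps.
End LipschitzReparametrization.

Lemma compact_uniform_parameter {R : realType} {X : pseudoMetricType R}
    (K : set X) (P : R -> X -> Prop) : compact K ->
  (forall d d' z, 0 < d' <= d -> P d z -> P d' z) ->
  (forall z, K z -> exists2 r, 0 < r & exists2 d, 0 < d & forall z', ball z r z' -> P d z') ->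
  exists2 d, 0 < d & forall z, K z -> P d z.
Proof.
move=> cK Pdecr Ploc.
have [z Kz|e /= e0 Pe] := (compact_near_coveringP K).1 cK R (nbhs (0:R))
  (fun d z => 0 < d -> P d z).
  have [r r0 [d d0 Pd]] := Ploc z Kz.
  exists (ball z r, ball (0:R) d); first by split; apply: nbhsx_ballx.
  move=> [z' d'] [/= zz' d'd] d'0; apply: (Pdecr d); last exact: Pd.
  by rewrite d'0 /=; move: d'd; rewrite -ball_normE /= sub0r normrN gtr0_norm // => /ltW.
have e2 : 0 < e / 2 by rewrite divr_gt0.
exists (e / 2) => // z Kz; apply: Pe => //.
by rewrite /= sub0r normrN gtr0_norm // ltr_pdivrMr // ltr_pMr // ltr1n.
Qed.

Lemma compact_space_uniform_parameter {R : realType} {M : metricType R}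
    (P : R -> M -> Prop) : compact [set: M] ->
  (forall d d' z, 0 < d' <= d -> P d z -> P d' z) ->
  (forall z, exists2 r, 0 < r & exists2 d, 0 < d & forall z', mdist z z' < r -> P d z') ->
  exists2 d, 0 < d & forall z, P d z.
Proof.
move=> cM Pdecr Ploc; have [|d d0 Pd] := compact_uniform_parameter cM Pdecr.
  move=> z _; have [r r0 [d d0 Pd]] := Ploc z.
  by exists r => //; exists d => // z'; rewrite ballEmdist; apply: Pd.
by exists d => // z; apply: Pd.
Qed.

Section Flow.
Context {R : realType} {M : metricType R} (phi : R -> M -> M).
Hypothesis flow : is_flow phi.

Lemma flow0 x : phi 0 x = x. Proof. by case: flow => _ []. Qed.
Lemma flowD s t x : phi (s + t) x = phi s (phi t x). Proof. by case: flow => _ []. Qed.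

Lemma flowN_fixed s x : phi (- s) x = x -> phi s x = x.
Proof. by move=> fx; rewrite -{1}fx -flowD subrr flow0. Qed.

Lemma flow_natmul_period s x (n : nat) : phi s x = x -> phi (n%:R * s) x = x.
Proof.
move=> fx; elim: n => [|n IH]; first by rewrite mul0r flow0.
by rewrite -natr1 mulrDl mul1r flowD fx IH.
Qed.

Lemma flow_continuous_at s0 z0 e : 0 < e -> exists2 r, 0 < r &
  forall s z, `|s - s0| < r -> mdist z0 z < r -> mdist (phi s0 z0) (phi s z) < e.
Proof.
move=> e0; have /metricType_numDomainType.cvgrPdist_lt/(_ e e0) := flow.1 (s0, z0).
case=> [[P Q] /= [/nbhs_ballP [r1 r10 P1] /nbhs_ballP [r2 r20 Q2]] PQ].
exists (Num.min r1 r2) => [|s z]; first by rewrite lt_min r10 r20.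
rewrite !lt_min => /andP[s1 _] /andP[_ z2]; apply: (PQ (s, z)); split => /=.
  by apply: P1; rewrite -ball_normE /= distrC.
by apply: Q2; rewrite ballEmdist.
Qed.

Lemma flow_displacement_stable t z : phi t z != z -> exists2 r, 0 < r &
  forall z', mdist z z' < r -> mdist z (phi t z) / 3 <= mdist z' (phi t z').
Proof.
move=> tz; set D := mdist z (phi t z).
have D3 : 0 < D / 3 by rewrite divr_gt0 // mdist_gt0 eq_sym.
have [r r0 Hr] := flow_continuous_at t z D3.
exists (Num.min r (D / 3)) => [|z']; first by rewrite lt_min r0 D3.
rewrite lt_min => /andP[z1 z2]; have := Hr t z'; rewrite subrr normr0 => /(_ r0 z1).
have := metric_triangle z z' (phi t z); have := metric_triangle z' (phi t z') (phi t z).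
by rewrite (metric_sym (phi t z')) -/D; lra.
Qed.

Lemma not_Sing_moves_forward z : ~ Sing phi z -> exists2 t, 0 <= t & phi t z != z.
Proof.
move=> /existsNP [t /eqP tz]; have [t0|t0] := leP 0 t; first by exists t.
exists (- t); first by rewrite oppr_ge0 ltW.
by apply: contra tz => /eqP/flowN_fixed ->.
Qed.

Definition far_from_Sing (eta : R) (z : M) := forall p, Sing phi p -> eta <= mdist p z.

Lemma not_far_from_Sing_open eta z : ~ far_from_Sing eta z ->
  exists2 r, 0 < r & forall z', mdist z z' < r -> ~ far_from_Sing eta z'.
Proof.
move=> /existsNP [p /not_implyP [Sp /negP]]; rewrite -ltNge => pz.
exists (eta - mdist p z) => [|z' zz' Fz']; first by rewrite subr_gt0.
by have := Fz' p Sp; have := metric_triangle p z z'; lra.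
Qed.

Section Compact.
Hypothesis cM : compact [set: M].

Lemma flow_small_time_uniform al : 0 < al ->
  exists2 be, 0 < be & forall z a, `|a| <= be -> mdist z (phi a z) < al.
Proof.
move=> al0; apply: compact_space_uniform_parameter cM _ _.
  by move=> d d' z /andP[_ d'd] Pd a ad'; apply: Pd; apply: le_trans d'd.
move=> z; have al2 : 0 < al / 2 by rewrite divr_gt0.
have [r r0 Hr] := flow_continuous_at 0 z al2.
have r2 : 0 < Num.min r (al / 2) by rewrite lt_min r0 al2.
exists (Num.min r (al / 2)) => //; exists (Num.min r (al / 2) / 2) => [|z'].
  by rewrite divr_gt0.
rewrite lt_min => /andP[zr za] a ar.
have : `|a - 0| < r.
  rewrite subr0; apply: (le_lt_trans ar); rewrite ltr_pdivrMr //.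
  by rewrite (@le_lt_trans _ _ r) ?ge_min ?lexx // ltr_pMr // ltr1n.
move=> /Hr /(_ zr); rewrite flow0 => H.
apply: (le_lt_trans (metric_triangle z' z _)); rewrite metric_sym.
by rewrite [al]splitr ltrD.
Qed.

Lemma flow_unit_time_equicontinuous m : 0 < m ->
  exists2 de, 0 < de & forall s y y', 0 <= s <= 1 -> mdist y y' < de ->
    mdist (phi s y) (phi s y') < m.
Proof.
move=> m0.
have cK : compact (`[(0:R), 1] `*` [set: M]) by apply: compact_setX => //; exact: segment_compact.
pose P de (p : R * M) := forall y', mdist p.2 y' < de -> mdist (phi p.1 p.2) (phi p.1 y') < m.
have [|[s0 z0] _|de de0 Pde] := compact_uniform_parameter cK (P := P).
- by move=> d d' [s y] /andP[_ d'd] Pd y' yy'; apply: Pd; apply: lt_le_trans d'd.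
- have m2 : 0 < m / 2 by rewrite divr_gt0.
  have [r r0 Hr] := flow_continuous_at s0 z0 m2.
  have r2 : 0 < r / 2 by rewrite divr_gt0.
  have r2r : r / 2 < r by rewrite ltr_pdivrMr // ltr_pMr // ltr1n.
  exists (r / 2) => //; exists (r / 2) => // [[s y]] [/= sr yr] y' yy'.
  move: sr yr; rewrite -ball_normE ballEmdist /= => sr yr.
  have z0y' : mdist z0 y' < r.
    apply: le_lt_trans (metric_triangle z0 y y') _; rewrite [r]splitr; exact: ltrD.
  apply: le_lt_trans (metric_triangle _ (phi s0 z0) _) _.
  rewrite [m]splitr metric_sym; apply: ltrD; apply: Hr => //; rewrite 1?distrC.
  + exact: lt_trans sr r2r.
  + exact: lt_trans yr r2r.
  + exact: lt_trans sr r2r.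
- by exists de => // s y y' s01; apply: (Pde (s, y)).
Qed.

Lemma far_from_Sing_moves_uniform eta : 0 < eta -> exists2 mu, 0 < mu &
  forall z, far_from_Sing eta z -> exists t, [/\ 0 <= t, t * mu <= 1 & mu <= mdist z (phi t z)].
Proof.
move=> eta0; apply: compact_space_uniform_parameter cM _ _.
  move=> d d' z /andP[d'0 d'd] Pd /Pd [t [t0 td dz]].
  by exists t; split => //; nra.
move=> z; have [Fz|nFz] := pselect (far_from_Sing eta z); last first.
  have [r r0 Hr] := not_far_from_Sing_open nFz.
  by exists r => //; exists 1 => // z' /Hr.
have nSz : ~ Sing phi z by move=> /Fz; rewrite mdistxx; lra.
have [t t0 tz] := not_Sing_moves_forward nSz.
have [r r0 Hr] := flow_displacement_stable tz; exists r => //.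
have D0 : 0 < mdist z (phi t z) by rewrite mdist_gt0 eq_sym.
have t1 : 0 < t + 1 by lra.
exists (Num.min (mdist z (phi t z) / 3) (t + 1)^-1) => [|z' /Hr zz' _].
  by rewrite lt_min divr_gt0 // invr_gt0.
exists t; split => //; last by rewrite (le_trans _ zz') // ge_min lexx.
rewrite (@le_trans _ _ (t / (t + 1))) //; first by rewrite ler_wpM2l // ge_min lexx orbT.
by rewrite ler_pdivrMr // mul1r; lra.
Qed.

(* A point that returns after a time [s <= s0] is periodic of period [s], so it would stay
   within a small distance of itself for all times. *)
Lemma no_small_period eta : 0 < eta ->
  exists2 s0, 0 < s0 & forall s z, 0 < s <= s0 -> far_from_Sing eta z -> phi s z != z.
Proof.
move=> eta0; have [mu mu0 Hmu] := far_from_Sing_moves_uniform eta0.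
have [be be0 Hbe] := flow_small_time_uniform mu0.
exists be => // s z /andP[s0 sbe] /Hmu [t [t0 tmu mut]]; apply/eqP => sz.
have /truncn_itv/andP[n1 n2] : 0 <= t / s by rewrite divr_ge0 // ltW.
set n := Num.truncn (t / s) in n1 n2.
rewrite ler_pdivlMr // in n1; rewrite ltr_pdivrMr // in n2.
have : `|t - n%:R * s| <= be.
  by rewrite ger0_norm ?subr_ge0 //; move: n2; rewrite -natr1 mulrDl mul1r; lra.
have tE : phi t z = phi (t - n%:R * s) z.
  by rewrite -{1}(subrK (n%:R * s) t) flowD flow_natmul_period.
by move=> /(Hbe z); rewrite -tE; lra.
Qed.

Lemma far_displacement_lower_bound eta s : 0 < eta ->
  (forall z, far_from_Sing eta z -> phi s z != z) ->
  exists2 m, 0 < m & forall z, far_from_Sing eta z -> m <= mdist z (phi s z).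
Proof.
move=> eta0 Hs; apply: compact_space_uniform_parameter cM _ _.
  by move=> d d' z /andP[_ d'd] Pd /Pd; apply: le_trans.
move=> z; have [Fz|nFz] := pselect (far_from_Sing eta z); last first.
  have [r r0 Hr] := not_far_from_Sing_open nFz.
  by exists r => //; exists 1 => // z' /Hr.
have sz := Hs z Fz; have [r r0 Hr] := flow_displacement_stable sz.
exists r => //; exists (mdist z (phi s z) / 3) => [|z' /Hr //].
by rewrite divr_gt0 // mdist_gt0 eq_sym.
Qed.

Lemma far_displacement_lower_bound_pm eta s : 0 < eta ->
  (forall z, far_from_Sing eta z -> phi s z != z) -> exists2 m, 0 < m &
  forall z, far_from_Sing eta z -> m <= mdist z (phi s z) /\ m <= mdist z (phi (- s) z).
Proof.
move=> eta0 Hs; have [m1 m10 disp1] := far_displacement_lower_bound eta0 Hs.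
have [|m2 m20 disp2] := @far_displacement_lower_bound eta (- s) eta0.
  by move=> z /Hs; apply: contra => /eqP/flowN_fixed ->.
exists (Num.min m1 m2) => [|z Fz]; first by rewrite lt_min m10 m20.
by rewrite !ge_min disp1 // disp2 // orbT.
Qed.

End Compact.

Definition lyapunov_trap (rho eta : R) (p : M) :=
  (lyapunov_stable phi p ->
    forall x, mdist p x < eta -> forall t, 0 <= t -> mdist p (phi t x) < rho) /\
  (~ lyapunov_stable phi p ->
    forall x, mdist p x < eta -> forall t, t <= 0 -> mdist p (phi t x) < rho).

Lemma lyapunov_trap_exists rho p :
  lyapunov_stable phi p \/ lyapunov_unstable phi p -> 0 < rho ->
  exists2 eta, 0 < eta & lyapunov_trap rho eta p.
Proof.
move=> stp rho0; have rho_nbhs : nbhs p (ball p rho) by apply: nbhsx_ballx.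
have [st|nst] := pselect (lyapunov_stable phi p).
  have [U /nbhs_ballP [r r0 rU] HU] := st _ rho_nbhs.
  exists r => //; split => // _ x px t t0.
  have Ux : U x by apply: rU; rewrite ballEmdist.
  by have := HU t x t0 Ux; rewrite ballEmdist.
have [//|unst] := stp; have [U /nbhs_ballP [r r0 rU] HU] := unst _ rho_nbhs.
exists r => //; split => // _ x px t t0.
have Ux : U x by apply: rU; rewrite ballEmdist.
by have := HU t x t0 Ux; rewrite ballEmdist.
Qed.

Lemma lyapunov_trap_shrink rho eta eta' p : eta' <= eta ->
  lyapunov_trap rho eta p -> lyapunov_trap rho eta' p.
Proof.
move=> e'e [st unst]; split => [/st Hp|/unst Hp] x px; apply: Hp; exact: lt_le_trans px e'e.
Qed.

Lemma lyapunov_trap_uniform rho : finite_set (Sing phi) ->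
  (forall p, Sing phi p -> lyapunov_stable phi p \/ lyapunov_unstable phi p) -> 0 < rho ->
  exists2 eta, 0 < eta & forall p, Sing phi p -> lyapunov_trap rho eta p.
Proof.
move=> /finite_fsetP [X ->] stX rho0.
have trap_near p : p \in X -> \forall eta \near 0^'+, lyapunov_trap rho eta p.
  move=> pX; have [r r0 Hr] := lyapunov_trap_exists (stX p pX) rho0.
  near=> eta; apply: lyapunov_trap_shrink Hr.
  by apply: ltW; near: eta; apply: nbhs_right_lt.
have trapX : \forall eta \near 0^'+, forall p, p \in X -> lyapunov_trap rho eta p.
  by apply: filterS (filter_bigI _ trap_near) => eta /= H p pX; exact: H.
near (0:R)^'+ => eta; exists eta; first by near: eta; exact: nbhs_right_gt.
by near: eta.
Unshelve. all: by end_near. Qed.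
End Flow.

Section Reparametrization.
Context {R : realType} {M : metricType R} (phi : R -> M -> M).
Hypothesis flow : is_flow phi.
Variables (eps rho eta be sig m ep d : R).
Hypotheses (rho0 : 0 < rho) (rho_eps : 4 * rho < eps).
Hypothesis trap : forall p, Sing phi p -> lyapunov_trap phi rho eta p.
Hypothesis small_time_eta : forall z a, `|a| <= be -> mdist z (phi a z) < eta / 2.
Hypothesis small_time_rho : forall z a, `|a| <= be -> mdist z (phi a z) < rho.
Hypotheses (sig0 : 0 < sig) (sig_be : 3 * sig <= be).
Hypotheses (sig_quarter : sig <= 4^-1) (sig_eps : 2 * sig < eps).
Hypothesis displacement : forall z, far_from_Sing phi (eta / 2) z ->
  m <= mdist z (phi sig z) /\ m <= mdist z (phi (- sig) z).
Hypothesis equicont : forall s y y', 0 <= s <= 1 -> mdist y y' < ep ->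
  mdist (phi s y) (phi s y') < m / 3.
Hypotheses (ep_m : ep <= m / 3) (ep_rho : ep <= rho) (d_m : d <= m / 3).
Variables (xi : R -> M) (x : M) (h : R -> R).
Hypotheses (pseudo : pseudotrajectory phi d xi) (hRep : is_Rep h).
Hypothesis shadow : forall t, mdist (xi t) (phi (h t) x) < ep.

Local Notation traj u := (phi u x).

Lemma h_increasing a b : a < b -> h a < h b. Proof. by case: hRep => _ [_]; apply. Qed.

Lemma h_le a b : a <= b -> h a <= h b.
Proof. by rewrite le_eqVlt => /orP[/eqP->|/h_increasing/ltW]. Qed.

Definition near_stable u :=
  exists p, [/\ Sing phi p, lyapunov_stable phi p & mdist p (traj u) < eta].
Definition near_unstable u :=
  exists p, [/\ Sing phi p, ~ lyapunov_stable phi p & mdist p (traj u) < eta].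
Definition stable_reached t := exists u, u <= h t /\ near_stable u.
Definition unstable_ahead t := exists u, h t <= u /\ near_unstable u.
Definition transit t := ~ stable_reached t /\ ~ unstable_ahead t.

Lemma near_stable_trapped u : near_stable u ->
  exists p, forall v, u <= v -> mdist p (traj v) < rho.
Proof.
move=> [p [Sp st pu]]; exists p => v uv; have [/(_ st _ pu (v - u)) + _] := trap Sp.
by rewrite subr_ge0 -(flowD flow) ?subrK //; apply.
Qed.

Lemma near_unstable_trapped u : near_unstable u ->
  exists p, forall v, v <= u -> mdist p (traj v) < rho.
Proof.
move=> [p [Sp nst pu]]; exists p => v vu; have [_ /(_ nst _ pu (v - u))] := trap Sp.
by rewrite subr_le0 -(flowD flow) ?subrK //; apply.
Qed.

Lemma stable_reached_ge t t' : stable_reached t -> t <= t' -> stable_reached t'.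
Proof. by move=> [u [ut Nu]] tt'; exists u; split => //; exact: le_trans ut (h_le tt'). Qed.

Lemma unstable_ahead_le t t' : unstable_ahead t -> t' <= t -> unstable_ahead t'.
Proof. by move=> [u [tu Nu]] t't; exists u; split => //; exact: le_trans (h_le t't) tu. Qed.

Lemma transit_interval a b r : transit a -> transit b -> a <= r <= b -> transit r.
Proof.
move=> [_ nBa] [nAb _] /andP[ar rb]; split => [Ar|Br].
  by apply: nAb; apply: stable_reached_ge Ar rb.
by apply: nBa; apply: unstable_ahead_le Br ar.
Qed.

Lemma transit_far a b u : transit a -> transit b -> h a <= u <= h b ->
  far_from_Sing phi eta (traj u).
Proof.
move=> [_ nBa] [nAb _] /andP[au ub] p Sp; rewrite leNgt; apply/negP => pu.
have [st|nst] := pselect (lyapunov_stable phi p).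
  by apply: nAb; exists u; split => //; exists p.
by apply: nBa; exists u; split => //; exists p.
Qed.

(* If the drift [h (a + r) - h a - r] reached [sig], the orbit would have to be at the same
   time [m]-displaced from and [m]-close to [traj (h (a + r))]. *)
Lemma transit_drift_neq a b r : transit a -> transit b -> 0 <= r <= 1 -> a + r <= b ->
  `|h (a + r) - h a - r| != sig.
Proof.
move=> Ta Tb r01 arb; apply/eqP; set e := h (a + r) - h a - r => e_sig.
set u := h (a + r); set z := traj (h a + r).
have uE : traj u = phi e z by rewrite -(flowD flow); congr (phi _ x); rewrite /e /u; ring.
have Fu : far_from_Sing phi eta (traj u).
  by apply: (transit_far Ta Tb); rewrite !h_le //; lra.
have uz : mdist (traj u) z < eta / 2.
  rewrite (_ : z = phi (- e) (traj u)); last by rewrite uE -(flowD flow) addNr (flow0 flow).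
  by apply: small_time_eta; rewrite normrN e_sig; move: sig0 sig_be; lra.
have Fz : far_from_Sing phi (eta / 2) z.
  by move=> p /Fu; have := metric_triangle p z (traj u); rewrite (metric_sym z); lra.
have m_zu : m <= mdist z (traj u).
  have [m_sig m_Nsig] := displacement Fz; rewrite uE.
  have [->|->] // : e = sig \/ e = - sig.
  by rewrite -e_sig; case: (leP 0 e) => e0; [left; rewrite ger0_norm|right; rewrite ltr0_norm ?opprK].
have zE : z = phi r (traj (h a)) by rewrite -(flowD flow) addrC.
have z_xi : mdist z (phi r (xi a)) < m / 3.
  by rewrite metric_sym zE; apply: equicont r01 (shadow a).
have xi_xi : mdist (phi r (xi a)) (xi (a + r)) < m / 3.
  by rewrite metric_sym; apply: lt_le_trans (pseudo a r01) d_m.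
have xi_u : mdist (xi (a + r)) (traj u) < m / 3 by apply: lt_le_trans (shadow _) ep_m.
have := metric_triangle z (phi r (xi a)) (traj u).
have := metric_triangle (phi r (xi a)) (xi (a + r)) (traj u); lra.
Qed.

Lemma drift_continuous a : continuous (fun r => `|h (a + r) - h a - r|).
Proof.
move=> r; apply: (@continuous_comp _ _ _ (fun r => h (a + r) - h a - r) Num.norm).
  apply: continuousB; last exact: cvg_id.
  apply: continuousB; last exact: cvg_cst.
  apply: (@continuous_comp _ _ _ (fun r => a + r) h); last exact: hRep.1.
  by apply: continuousD; [exact: cvg_cst | exact: cvg_id].
exact: norm_continuous.
Qed.

Lemma transit_unit_drift a b : transit a -> transit b -> a <= b <= a + 1 ->
  `|(h b - b) - (h a - a)| <= sig.
Proof.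
move=> Ta Tb /andP[ab ba1]; set s := b - a.
have bE : b = a + s by rewrite /s addrC subrK.
have s0 : 0 <= s by rewrite subr_ge0.
rewrite (_ : _ - _ = h (a + s) - h a - s); last by rewrite bE; ring.
rewrite leNgt; apply/negP => s_sig.
have cw := continuous_subspaceT (A := `[0, s]) (@drift_continuous a).
have [|r /andP[r0 rs] r_sig] := @IVT _ _ _ _ sig s0 cw.
  by rewrite addr0 subrr subr0 normr0 ge_min le_max ltW // (ltW s_sig) orbT.
move: r0 rs; rewrite !bnd_simp /s => r0 rs.
have r1 : 0 <= r <= 1 by rewrite r0 /=; lra.
have arb : a + r <= b by lra.
by have := transit_drift_neq Ta Tb r1 arb; rewrite r_sig eqxx.
Qed.

Lemma h_continuous_at a : exists2 th, 0 < th & forall r, `|a - r| < th -> `|h a - h r| < sig.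
Proof.
have /cvgrPdist_lt/(_ sig sig0)/nbhs_ballP [th th0 Hth] := hRep.1 a.
by exists th => // r ar; apply: Hth; rewrite -ball_normE.
Qed.

Lemma traj_close v w : `|v - w| <= 3 * sig -> mdist (traj w) (traj v) < rho.
Proof.
move=> vw; rewrite -(subrK w v) (flowD flow); apply: small_time_rho.
exact: le_trans vw sig_be.
Qed.

Lemma shadow_via_trap t w p : mdist p (traj (h t)) < rho -> mdist p (traj w) < 2 * rho ->
  mdist (xi t) (traj w) < eps.
Proof.
move=> p_ht p_w; have := shadow t; have := metric_triangle (xi t) (traj (h t)) (traj w).
have := metric_triangle (traj (h t)) p (traj w); rewrite (metric_sym _ p).
by move: ep_rho rho_eps; lra.
Qed.

Lemma trapped_forward_close u p v w : (forall v', u <= v' -> mdist p (traj v') < rho) ->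
  u <= v -> v - 3 * sig <= w -> mdist p (traj w) < 2 * rho.
Proof.
move=> trapp uv vw; have [uw|wu] := leP u w; first by have := trapp _ uw; move: rho0; lra.
have /traj_close : `|w - v| <= 3 * sig by rewrite ler_norml; move: sig0; lra.
by have := trapp _ uv; have := metric_triangle p (traj v) (traj w); lra.
Qed.

Lemma trapped_backward_close u p v w : (forall v', v' <= u -> mdist p (traj v') < rho) ->
  v <= u -> w <= v + 3 * sig -> mdist p (traj w) < 2 * rho.
Proof.
move=> trapp vu wv; have [wu|uw] := leP w u; first by have := trapp _ wu; move: rho0; lra.
have /traj_close : `|w - v| <= 3 * sig by rewrite ler_norml; move: sig0; lra.
by have := trapp _ vu; have := metric_triangle p (traj v) (traj w); lra.
Qed.

Definition flanked (J : set R) := forall t, ~ J t ->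
  (stable_reached t /\ forall t', J t' -> t' < t) \/
  (unstable_ahead t /\ forall t', J t' -> t < t').

Section Smoothing.
Variables (J : set R) (c : R -> R).
Hypothesis J0 : J !=set0.
Hypothesis c_lip : forall a b, `|c a - c b| <= (2 * sig) * `|a - b|.
Hypothesis c_J : forall t, J t -> h t - t - sig <= c t <= h t - t.
Hypothesis J_flanked : flanked J.

Lemma id_add_c_le a b : a <= b -> a + c a <= b + c b.
Proof.
rewrite le_eqVlt => /orP[/eqP-> //|ab]; apply: ltW.
by apply: (lipschitz_id_add_increasing _ c_lip) ab; move: sig_quarter; lra.
Qed.

Lemma shadow_in_J t : J t -> mdist (xi t) (traj (t + c t)) < eps.
Proof.
move=> /c_J /andP[c1 c2].
have /traj_close : `|t + c t - h t| <= 3 * sig by rewrite ler_norml; move: sig0; lra.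
have := shadow t; have := metric_triangle (xi t) (traj (h t)) (traj (t + c t)).
by move: ep_rho rho_eps rho0; lra.
Qed.

Lemma stable_reached_near_sup t th : stable_reached t -> (forall t', J t' -> t' < t) ->
  0 < th -> exists t2, [/\ t2 <= t, sup J <= t2, t2 < sup J + th & stable_reached t2].
Proof.
move=> At Jt th0; have hsJ : has_sup J by split => //; exists t => t' /Jt /ltW.
have St : sup J <= t by apply: ge_sup => // t' /Jt /ltW.
have [tS|tS] := ltP t (sup J + th / 2); first by exists t; split => //; lra.
exists (sup J + th / 2); split => //; try lra.
have nJ : ~ J (sup J + th / 2) by move=> /(sup_upper_bound hsJ); lra.
have [[]//|[_ JS]] := J_flanked nJ.
by case: J0 => t1 Jt1; have := JS t1 Jt1; have := sup_upper_bound hsJ Jt1; lra.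
Qed.

Lemma unstable_ahead_near_inf t th : unstable_ahead t -> (forall t', J t' -> t < t') ->
  0 < th -> exists t2, [/\ t <= t2, t2 <= inf J, inf J - th < t2 & unstable_ahead t2].
Proof.
move=> Bt Jt th0; have hiJ : has_inf J by split => //; exists t => t' /Jt /ltW.
have tI : t <= inf J by apply: lb_le_inf => // t' /Jt /ltW.
have [It|It] := ltP (inf J - th / 2) t; first by exists t; split => //; lra.
exists (inf J - th / 2); split => //; try lra.
have nJ : ~ J (inf J - th / 2) by move=> /(ge_inf hiJ.2); lra.
have [[_ JI]|[]//] := J_flanked nJ.
by case: J0 => t1 Jt1; have := JI t1 Jt1; have := ge_inf hiJ.2 Jt1; lra.
Qed.

(* The orbit of [x] is trapped near a stable singular point from time [h t2] on, and [t + c t]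
   cannot lag behind [h t2] by more than [3 sig]. *)
Lemma shadow_after_J t : stable_reached t -> (forall t', J t' -> t' < t) ->
  mdist (xi t) (traj (t + c t)) < eps.
Proof.
move=> At Jt; have hsJ : has_sup J by split => //; exists t => t' /Jt /ltW.
have [th th0 hS] := h_continuous_at (sup J).
have [t1 Jt1 t1S] := sup_adherent th0 hsJ; have t1S' := sup_upper_bound hsJ Jt1.
have [t2 [t2t St2 t2S [u [ut2 Nu]]]] := stable_reached_near_sup At Jt th0.
have [p trapp] := near_stable_trapped Nu.
apply: (@shadow_via_trap _ _ p); first by apply: trapp; exact: le_trans ut2 (h_le t2t).
apply: trapped_forward_close trapp ut2 _.
have /hS : `|sup J - t1| < th by rewrite ger0_norm ?subr_ge0 //; lra.
rewrite ltr_norml => /andP[_ h1].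
have /hS : `|sup J - t2| < th by rewrite ler0_norm ?subr_le0 //; lra.
rewrite ltr_norml => /andP[h2 _].
have /andP[c1 _] := c_J Jt1; have := id_add_c_le (ltW (Jt t1 Jt1)).
by move: sig0; lra.
Qed.

Lemma shadow_before_J t : unstable_ahead t -> (forall t', J t' -> t < t') ->
  mdist (xi t) (traj (t + c t)) < eps.
Proof.
move=> Bt Jt; have hiJ : has_inf J by split => //; exists t => t' /Jt /ltW.
have [th th0 hI] := h_continuous_at (inf J).
have [t1 Jt1 t1I] := inf_adherent th0 hiJ; have t1I' := ge_inf hiJ.2 Jt1.
have [t2 [tt2 t2I It2 [u [t2u Nu]]]] := unstable_ahead_near_inf Bt Jt th0.
have [p trapp] := near_unstable_trapped Nu.
apply: (@shadow_via_trap _ _ p); first by apply: trapp; exact: le_trans (h_le tt2) t2u.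
apply: trapped_backward_close trapp t2u _.
have /hI : `|inf J - t1| < th by rewrite ler0_norm ?subr_le0 //; lra.
rewrite ltr_norml => /andP[h1 _].
have /hI : `|inf J - t2| < th by rewrite ger0_norm ?subr_ge0 //; lra.
rewrite ltr_norml => /andP[_ h2].
have /andP[_ c2] := c_J Jt1; have := id_add_c_le (ltW (Jt t1 Jt1)).
by move: sig0; lra.
Qed.

Lemma shadow_smoothed t : mdist (xi t) (traj (t + c t)) < eps.
Proof.
have [/shadow_in_J //|nJt] := pselect (J t).
by have [[]|[]] := J_flanked nJt; [exact: shadow_after_J|exact: shadow_before_J].
Qed.
End Smoothing.

Lemma shadow_all_stable_reached : (forall t, stable_reached t) ->
  forall t, mdist (xi t) (traj t) < eps.
Proof.
move=> allA t; have [g [_ [hg _]]] := hRep.2.1.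
have [u [uh Nu]] := allA (g (Num.min (h t) t)); rewrite hg in uh.
have [p trapp] := near_stable_trapped Nu.
apply: (@shadow_via_trap _ _ p).
  by apply: trapp; apply: le_trans uh _; rewrite ge_min lexx.
have ut : u <= t by apply: le_trans uh _; rewrite ge_min lexx orbT.
by have := trapp t ut; move: rho0; lra.
Qed.

Lemma shadow_all_unstable_ahead : (forall t, unstable_ahead t) ->
  forall t, mdist (xi t) (traj t) < eps.
Proof.
move=> allB t; have [g [_ [hg _]]] := hRep.2.1.
have [u [hu Nu]] := allB (g (Num.max (h t) t)); rewrite hg in hu.
have [p trapp] := near_unstable_trapped Nu.
apply: (@shadow_via_trap _ _ p).
  by apply: trapp; apply: le_trans _ hu; rewrite le_max lexx.
have tu : t <= u by apply: le_trans _ hu; rewrite le_max lexx orbT.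
by have := trapp t tu; move: rho0; lra.
Qed.

Definition drift_coarse_lipschitz (J : set R) :=
  forall a b, J a -> J b -> `|(h a - a) - (h b - b)| <= sig * (`|a - b| + 1).

Lemma transit_flanked : flanked transit.
Proof.
move=> t nTt; have [At|nAt] := pselect (stable_reached t).
  left; split => // t' [nAt' _]; rewrite ltNge; apply/negP => tt'.
  by apply: nAt'; apply: stable_reached_ge At tt'.
have [Bt|nBt] := pselect (unstable_ahead t); last by case: nTt.
right; split => // t' [_ nBt']; rewrite ltNge; apply/negP => t't.
by apply: nBt'; apply: unstable_ahead_le Bt t't.
Qed.

Lemma transit_drift_coarse_lipschitz : drift_coarse_lipschitz transit.
Proof.
apply: (unit_steps_coarse_lipschitz (ltW sig0)); first exact: transit_interval.
exact: transit_unit_drift.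
Qed.

(* Without transit times, the switch from [unstable_ahead] to [stable_reached] happens at a
   single time [sup unstable_ahead]. *)
Lemma no_transit_flanked t2 : (forall t, ~ transit t) -> ~ unstable_ahead t2 ->
  unstable_ahead !=set0 -> flanked [set sup unstable_ahead].
Proof.
move=> nT nB2 B0; set S := sup unstable_ahead.
have AorB t : stable_reached t \/ unstable_ahead t.
  by apply: contrapT => /not_orP [nA nB]; apply: (nT t).
have hsB : has_sup unstable_ahead.
  split => //; exists t2 => t Bt; rewrite leNgt; apply/negP => t2t.
  by apply: nB2; apply: unstable_ahead_le Bt (ltW t2t).
move=> t /= tS; have [St|tS'] := ltP S t.
  left; split => [|_ ->] //; have [//|Bt] := AorB t.
  by have := sup_upper_bound hsB Bt; rewrite -/S; lra.
have {tS tS'} tS : t < S by rewrite lt_neqAle tS' andbT; apply/eqP.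
right; split => [|_ -> //]; have St0 : 0 < S - t by rewrite subr_gt0.
have [t' Bt' tt'] := sup_adherent St0 hsB.
by apply: unstable_ahead_le Bt' _; rewrite -/S in tt'; lra.
Qed.

Lemma flanked_drift_set : (exists t, ~ stable_reached t) -> (exists t, ~ unstable_ahead t) ->
  exists J, [/\ J !=set0, drift_coarse_lipschitz J & flanked J].
Proof.
move=> [t1 nA1] [t2 nB2]; have [[t0 Tt0]|/forallNP nT] := pselect (exists t, transit t).
  exists transit; split; [by exists t0|exact: transit_drift_coarse_lipschitz|].
  exact: transit_flanked.
have B1 : unstable_ahead t1 by apply: contrapT => nB1; exact: nT t1 (conj nA1 nB1).
exists [set sup unstable_ahead]; split; first by exists (sup unstable_ahead).
  by move=> a b -> ->; rewrite !subrr normr0 add0r mulr1 ltW.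
exact: no_transit_flanked nT nB2 (ex_intro _ t1 B1).
Qed.

Lemma shadow_reparametrized :
  exists2 h', is_Rep_eps eps h' & forall t, mdist (xi t) (phi (h' t) x) < eps.
Proof.
have eps0 : 0 < eps by move: rho0 rho_eps; lra.
have [allA|/existsNP nA] := pselect (forall t, stable_reached t).
  by exists id; [exact: is_Rep_eps_id|exact: shadow_all_stable_reached].
have [allB|/existsNP nB] := pselect (forall t, unstable_ahead t).
  by exists id; [exact: is_Rep_eps_id|exact: shadow_all_unstable_ahead].
have [J [J0 J_drift J_flanked]] := flanked_drift_set nA nB.
have [c [c_lip c_J]] := coarse_lipschitz_approx J0 (ltW sig0) J_drift.
exists (fun t => t + c t); last exact: shadow_smoothed J0 c_lip c_J J_flanked.
by apply: (is_Rep_eps_id_add _ _ _ c_lip); move: sig0 sig_eps sig_quarter; lra.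
Qed.
End Reparametrization.

Lemma standard_to_oriented_shadowing {R : realType} {M : metricType R} (phi : R -> M -> M) :
  standard_shadowing phi -> oriented_shadowing phi.
Proof.
move=> std eps eps0; have [d d0 shd] := std eps eps0.
by exists d => // xi /shd [x [h [hRep _] xh]]; exists x; exists h.
Qed.

Lemma oriented_to_standard_shadowing {R : realType} {M : metricType R} (phi : R -> M -> M) :
  compact [set: M] -> is_flow phi -> finite_set (Sing phi) ->
  (forall p, Sing phi p -> lyapunov_stable phi p \/ lyapunov_unstable phi p) ->
  oriented_shadowing phi -> standard_shadowing phi.
Proof.
move=> cM flow fin ly ori eps eps0; set rho := eps / 8.
have rho0 : 0 < rho by rewrite divr_gt0.
have [eta eta0 trap] := lyapunov_trap_uniform fin ly rho0.
have eta2 : 0 < eta / 2 by rewrite divr_gt0.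
have eta_rho : 0 < Num.min (eta / 2) rho by rewrite lt_min eta2 rho0.
have [be be0 small] := flow_small_time_uniform flow cM eta_rho.
have [s0 s00 no_period] := no_small_period flow cM eta2.
set sig := Num.min (Num.min (be / 3) s0) (Num.min (eps / 4) 4^-1).
have sig0 : 0 < sig by rewrite /sig !lt_min s00 !divr_gt0 // invr_gt0 ltr0n.
have [sig_be3 sig_s0 sig_eps4 sig_quarter] : [/\ sig <= be / 3, sig <= s0, sig <= eps / 4
  & sig <= 4^-1] by split; rewrite /sig !ge_min ?lexx ?orbT.
have [|m m0 disp] := far_displacement_lower_bound_pm flow cM eta2 (s := sig).
  by move=> z; apply: no_period; rewrite sig0 sig_s0.
have m3 : 0 < m / 3 by rewrite divr_gt0.
have [de de0 equicont] := flow_unit_time_equicontinuous flow cM m3.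
set ep := Num.min (Num.min de (m / 3)) rho.
have ep0 : 0 < ep by rewrite /ep !lt_min de0 m3 rho0.
have [ep_de ep_m ep_rho] : [/\ ep <= de, ep <= m / 3 & ep <= rho].
  by split; rewrite /ep !ge_min ?lexx ?orbT.
have [d0 d00 shd] := ori ep ep0; set d := Num.min d0 (m / 3).
have [d_d0 d_m] : d <= d0 /\ d <= m / 3 by split; rewrite /d ge_min lexx ?orbT.
exists d => [|xi pseudo]; first by rewrite /d lt_min d00 m3.
have [x [h hRep xh]] := shd xi (fun t s s01 => lt_le_trans (pseudo t s s01) d_d0).
exists x; apply: (shadow_reparametrized flow rho0 _ trap _ _ sig0 _ sig_quarter _ disp _
  ep_m ep_rho d_m pseudo hRep xh).
- by rewrite /rho; lra.
- by move=> z a /(small z); rewrite lt_min => /andP[].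
- by move=> z a /(small z); rewrite lt_min => /andP[].
- by lra.
- by lra.
- by move=> s y y' s01 yy'; apply: equicont s01 (lt_le_trans yy' ep_de).
Qed.

Theorem theorem1p1 (R : realType) (M : metricType R) (phi : R -> M -> M) :
  compact [set: M] ->
  is_flow phi ->
  finite_set (Sing phi) ->
  (forall p, Sing phi p -> lyapunov_stable phi p \/ lyapunov_unstable phi p) ->
  (oriented_shadowing phi <-> standard_shadowing phi).
Proof.
move=> cM flow fin ly; split; first exact: oriented_to_standard_shadowing.
exact: standard_to_oriented_shadowing.
Qed.
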